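(* Let $F=(V,E)$ be a forest whose vertices are colored with $k\ge 2$ colors in a ratio $c_1:c_2:\dots:c_k$, where $c_i\in\mathbb{N}_{>0}$ for all $i\in[k]$, $\gcd(c_1,\dots,c_k)=1$ and $\sum_{i=1}^k c_i\ge 3$. Then every set of every minimum-cost fair clustering of $F$ has exactly $d=\sum_{i=1}^k c_i$ vertices.
   Context: All graphs are finite, simple and undirected. For a graph $G=(V,E)$ and a partition $\mathcal{P}$ of $V$, write $\mathcal{P}[u]$ for the set of $\mathcal{P}$ containing $u$. The cost is $$\mathrm{cost}(G,\mathcal{P})=\Big|\Big\{\{u,v\}\in\tbinom{V}{2}\setminus E : \mathcal{P}[u]=\mathcal{P}[v]\Big\}\Big|+\Big|\Big\{\{u,v\}\in E:\mathcal{P}[u]\neq\mathcal{P}[v]\Big\}\Big|.$$ A coloring is a map $c:V\to[k]$; let $V_i=c^{-1}(i)$. A set $S\subseteq V$ is fair if $|S\cap V_i|/|S|=|V_i|/|V|$ for every $i\in[k]$. A fair clustering is a partition of $V$ all of whose sets are fair; it is minimum-cost if no fair clustering has smaller cost. The colors are in ratio $c_1:\dots:c_k$ (positive integers) if there is $t\in\mathbb{N}_{>0}$ with $|V_i|=t\,c_i$ for all $i\in[k]$. *)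

From mathcomp Require Import all_boot.
Set Implicit Arguments. Unset Strict Implicit. Unset Printing Implicit Defensive.

Definition simple_graph (T : finType) (e : rel T) : Prop :=
  symmetric e /\ irreflexive e.

(* A cycle is a duplicate-free cyclic sequence of
   vertices v_0 ... v_{m-1} with m >= 3 and consecutive vertices (cyclically)
   adjacent. (Sequences of size <= 2 are not cycles in a simple graph.) *)
Definition forest (T : finType) (e : rel T) : Prop :=
  forall s : seq T, uniq s -> cycle e s -> size s <= 2.

Definition same_cluster (T : finType) (P : {set {set T}}) (u v : T) : bool :=
  pblock P u == pblock P v.

(* cost(G,P): number of unordered pairs {u,v} that are non-edges inside a
   cluster or edges between clusters. *)
Definition cost (T : finType) (e : rel T) (P : {set {set T}}) : nat :=
  #|[set p : {set T} | [exists u : T, exists v : T,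
       [&& u != v, p == [set u; v] & same_cluster P u v != e u v]]]|.

Definition color_class (T : finType) (k : nat) (col : T -> 'I_k) (i : 'I_k)
  : {set T} := [set x | col x == i].

(* S is fair: |S ∩ V_i| / |S| = |V_i| / |V| for all i (cross-multiplied;
   here S is nonempty and V nonempty in all uses). *)
Definition fair (T : finType) (k : nat) (col : T -> 'I_k) (S : {set T}) : bool :=
  [forall i : 'I_k, #|S :&: color_class col i| * #|T| == #|color_class col i| * #|S|].

Definition fair_clustering (T : finType) (k : nat) (col : T -> 'I_k)
  (P : {set {set T}}) : Prop :=
  partition P [set: T] /\ forall S, S \in P -> fair col S.

Definition min_cost_fair_clustering (T : finType) (e : rel T) (k : nat)
  (col : T -> 'I_k) (P : {set {set T}}) : Prop :=
  fair_clustering col P /\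
  forall Q, fair_clustering col Q -> cost e P <= cost e Q.

Definition in_ratio (T : finType) (k : nat) (col : T -> 'I_k) (c : 'I_k -> nat)
  : Prop :=
  exists2 t, 0 < t & forall i, #|color_class col i| = t * c i.

From mathcomp Require Import all_boot zify.
Set Implicit Arguments. Unset Strict Implicit. Unset Printing Implicit Defensive.

(* Since gcd(c_i) = 1, a fair cluster S contains m * c_i vertices of colour i for some
   m >= 1 (fair_color_counts); we show m = 1.  If m >= 2, pick a "piece" A of S with
   exactly c_i vertices of colour i (exists_piece).  Splitting S into the fair sets A and
   S \ A changes the cost by |A||S \ A| - 2 e(A, S \ A) (split_cluster_cost), so by
   minimality the cut has at least d^2 (m - 1) / 2 edges (piece_cut_lower_bound).  The
   same holds for the piece A' obtained by exchanging a vertex x of A with a vertex b of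
   S \ A of the same colour.  But a forest on |S| = md vertices has at most md - 1 edges,
   and counting how the edges at x and b move shows that the two cuts together have at
   most 2md - 3 edges (forest_swap_cut_bound): too few once d >= 3 and m >= 2. *)

Definition ecount (T : finType) (e : rel T) (U W : {set T}) : nat :=
  \sum_(u in U) \sum_(w in W) (e u w : nat).

Section EdgeCount.
Variables (T : finType) (e : rel T).
Implicit Types (U W : {set T}) (x y : T).

Lemma ecountUl U1 U2 W :
  [disjoint U1 & U2] -> ecount e (U1 :|: U2) W = ecount e U1 W + ecount e U2 W.
Proof. by move=> dU; rewrite /ecount -bigU //; apply: eq_bigl => x; rewrite !inE. Qed.

Lemma ecountUr U W1 W2 :
  [disjoint W1 & W2] -> ecount e U (W1 :|: W2) = ecount e U W1 + ecount e U W2.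
Proof.
move=> dW; rewrite /ecount -big_split; apply: eq_bigr => u _.
by rewrite -bigU //; apply: eq_bigl => x; rewrite !inE.
Qed.

Lemma ecountU1l x U W :
  x \notin U -> ecount e (x |: U) W = ecount e [set x] W + ecount e U W.
Proof. by move=> xU; rewrite ecountUl // disjoints1. Qed.

Lemma ecountU1r x U W :
  x \notin W -> ecount e U (x |: W) = ecount e U [set x] + ecount e U W.
Proof. by move=> xW; rewrite ecountUr // disjoints1. Qed.

Lemma ecountC U W : symmetric e -> ecount e U W = ecount e W U.
Proof.
move=> se; rewrite /ecount exchange_big; apply: eq_bigr => w _.
by apply: eq_bigr => u _; rewrite se.
Qed.

Lemma ecount11 x y : ecount e [set x] [set y] = e x y.
Proof. by rewrite /ecount !big_set1. Qed.

Lemma ecount1l x W : ecount e [set x] W = #|[set w in W | e x w]|.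
Proof.
rewrite /ecount big_set1 -sum1_card [RHS]big_mkcond [LHS]big_mkcond /=.
by apply: eq_bigr => w _; rewrite inE; case: (w \in W); case: (e x w).
Qed.

Lemma ecount_sq U W : symmetric e -> [disjoint U & W] ->
  ecount e (U :|: W) (U :|: W) = ecount e U U + 2 * ecount e U W + ecount e W W.
Proof. by move=> se dUW; rewrite ecountUl // !ecountUr // (ecountC W U se); lia. Qed.

End EdgeCount.

Lemma ecount_pairs (T : finType) (r : rel T) (U W : {set T}) :
  \sum_(u : T) \sum_(v : T) ((u \in U) && (v \in W) && r u v : nat) = ecount r U W.
Proof.
rewrite /ecount [RHS]big_mkcond /=; apply: eq_bigr => u _.
case: (u \in U) => /=; last by rewrite big1.
by rewrite [RHS]big_mkcond /=; apply: eq_bigr => v _; case: (v \in W).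
Qed.

Lemma ecount_complement (T : finType) (r : rel T) (U W : {set T}) :
  ecount r U W + ecount (fun u v => ~~ r u v) U W = #|U| * #|W|.
Proof.
rewrite /ecount -big_split /= -sum1_card big_distrl /=; apply: eq_bigr => u _.
rewrite -big_split /= mul1n -sum1_card; apply: eq_bigr => v _; by case: (r u v).
Qed.

Lemma last_drop_nth (T : Type) (x0 : T) (s : seq T) i :
  i < size s -> last (nth x0 s i) (drop i.+1 s) = last x0 s.
Proof.
elim: s i => [|a l IH] [|i] //= Hi; first by rewrite drop0.
by rewrite IH //; case: l IH Hi.
Qed.

Lemma chord_cycle (T : eqType) (e : rel T) (x0 : T) (s : seq T) i :
  i < size s -> sorted e s -> e (last x0 s) (nth x0 s i) -> cycle e (drop i s).
Proof.
move=> lti ss elast; have := drop_sorted i ss.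
rewrite (drop_nth x0 lti) /= rcons_path => ->.
by rewrite last_drop_nth.
Qed.

Section Forest.
Variables (T : finType) (e : rel T).
Hypotheses (sg : simple_graph e) (fe : forest e).

(* In a forest, a neighbour of the end of a duplicate-free path that lies on the path
   is its second-to-last vertex: any other one would close a cycle of length >= 3. *)
Lemma path_end_neighbour_index (x0 : T) (s : seq T) (w : T) :
  uniq s -> sorted e s -> w \in s -> e (last x0 s) w -> index w s = (size s).-2.
Proof.
move=> us ss ws ew; have [_ ie] := sg.
have lti : index w s < size s by rewrite index_mem.
have wlast : index w s != (size s).-1.
  apply: contraTneq ew => iw.
  by rewrite -(nth_index x0 ws) iw nth_last ie.
have ecyc : e (last x0 s) (nth x0 s (index w s)) by rewrite nth_index.
have := fe (drop_uniq (index w s) us) (chord_cycle lti ss ecyc).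
by rewrite size_drop; lia.
Qed.

Lemma path_end_degree (x0 : T) (s : seq T) :
  uniq s -> sorted e s -> #|[set y in s | e (last x0 s) y]| <= 1.
Proof.
move=> us ss; apply/card_le1_eqP => y z; rewrite !inE => /andP [ys ey] /andP [zs ez].
rewrite -(nth_index x0 ys) -(nth_index x0 zs).
by rewrite (path_end_neighbour_index us ss ys ey) (path_end_neighbour_index us ss zs ez).
Qed.

(* Every nonempty vertex set of a forest contains a vertex with at most one neighbour in
   it: the end of a longest path inside the set has all its neighbours on the path. *)
Lemma leaf_exists (U : {set T}) : U != set0 ->
  exists2 x, x \in U & #|[set y in U | e x y]| <= 1.
Proof.
case/set0Pn => x0 x0U.
pose path_of_size n :=
  [exists s : n.-tuple T, [&& uniq s, all (mem U) s & sorted e s]].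
have path1 : path_of_size 1 by apply/existsP; exists [tuple x0]; rewrite /= x0U.
have path_bound n : path_of_size n -> n <= #|T|.
  case/existsP=> s /and3P [us _ _].
  by rewrite -(size_tuple s) -(card_uniqP us) max_card.
have [N /existsP [[s /eqP sz] /and3P /= [us sU ss]] maxN] :=
  ex_maxnP (ex_intro _ 1 path1) path_bound.
have N1 : 0 < N by apply: maxN.
case: s sz us sU ss => [|a l] sz us sU ss; first by rewrite -sz in N1.
exists (last a l); first by move/allP: sU; apply; exact: mem_last.
apply: leq_trans (path_end_degree a us ss); apply: subset_leq_card.
apply/subsetP => y; rewrite !inE => /andP [yU ey]; rewrite ey andbT.
apply: contraT => yal; have : path_of_size N.+1.
  apply/existsP; have sz' : size (rcons (a :: l) y) == N.+1 by rewrite size_rcons sz.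
  exists (Tuple sz'); apply/and3P; split.
  - by rewrite rcons_uniq inE yal us.
  - by rewrite all_rcons inE yU sU.
  - by rewrite /= rcons_path; apply/andP.
by move/maxN; rewrite ltnn.
Qed.

(* A forest on a nonempty vertex set U has at most |U| - 1 edges; ecount counts each twice. *)
Lemma forest_edge_bound (U : {set T}) : U != set0 -> ecount e U U + 2 <= 2 * #|U|.
Proof.
have [se ie] := sg.
elim: {U}#|U| {-2}U (erefl #|U|) => [|n IH] U cU U0; first by rewrite -card_gt0 cU in U0.
have [x xU dx] := leaf_exists U0.
have UE : U = [set x] :|: (U :\ x) by rewrite setD1K.
have dx1 : [disjoint [set x] & U :\ x] by rewrite disjoints1 !inE eqxx.
have cU' : #|U :\ x| = n by move: cU; rewrite (cardsD1 x U) xU add1n => -[].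
have ex1 : ecount e [set x] (U :\ x) <= 1.
  rewrite ecount1l; apply: leq_trans dx; apply: subset_leq_card.
  by apply/subsetP => y; rewrite !inE => /andP [/andP [_ ->] ->].
rewrite {1 2}UE ecount_sq // ecount11 ie cU.
have [U'0 | U'n0] := eqVneq (U :\ x) set0.
  by rewrite U'0 cards0 in cU'; rewrite -cU' U'0 /ecount big_set0 big_set1 big_set0.
by have := IH _ cU' U'n0; lia.
Qed.

(* With C = A \ x and
   D = B \ b, both cuts contain the edges between C and D, and only the edge xb is
   counted twice among the edges at x or b; the forest bounds on A u B and on C u D
   finish the count. *)
Lemma forest_swap_cut_bound (A B : {set T}) (x b : T) :
  [disjoint A & B] -> x \in A -> b \in B -> A :\ x != set0 ->
  ecount e A B + ecount e (b |: (A :\ x)) (x |: (B :\ b)) + 3 <= 2 * #|A :|: B|.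
Proof.
move=> dAB xA bB C0; have [se ie] := sg.
set C := A :\ x; set D := B :\ b.
have notin_other y : y \in A -> y \in B -> False.
  by move=> yA yB; move: dAB; rewrite -setI_eq0 => /eqP/setP/(_ y); rewrite !inE yA yB.
have xC : x \notin C by rewrite !inE eqxx.
have bD : b \notin D by rewrite !inE eqxx.
have bC : b \notin C by rewrite !inE; apply/andP => -[_ /notin_other]; apply.
have xD : x \notin D by rewrite !inE; apply/andP => -[_]; apply: notin_other.
have dCD : [disjoint C & D] by apply: disjointW dAB; apply: subsetDl.
have CD0 : C :|: D != set0 by rewrite setU_eq0 negb_and C0.
have cardU_disj (U W : {set T}) : [disjoint U & W] -> #|U :|: W| = #|U| + #|W|.
  by move=> dUW; rewrite cardsU disjoint_setI0 // cards0 subn0.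
have cardAB : #|A :|: B| = (#|C :|: D|).+2.
  by rewrite !cardU_disj // (cardsD1 x A) (cardsD1 b B) xA bB -/C -/D; lia.
have AB0 : A :|: B != set0 by apply/set0Pn; exists x; rewrite inE xA.
have AE : A = x |: C by rewrite setD1K.
have BE : B = b |: D by rewrite setD1K.
have dxbC : [disjoint x |: C & b |: D] by rewrite -AE -BE.
have bound_AB := forest_edge_bound AB0.
have bound_CD := forest_edge_bound CD0.
rewrite ecount_sq // cardAB in bound_AB; rewrite cardAB.
rewrite AE BE in bound_AB *.
rewrite !(ecount_sq, ecountU1l, ecountU1r) ?disjoints1 // in bound_AB bound_CD *.
rewrite !ecount11 !ie (se b x) (ecountC C [set x] se) in bound_AB *.
by have := leq_b1 (e x b); lia.
Qed.

End Forest.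

Lemma set2_inj (T : finType) (a b u v : T) :
  u != v -> [set a; b] = [set u; v] -> (a == u) && (b == v) || (a == v) && (b == u).
Proof.
move=> uv E; have : u \in [set a; b] by rewrite E !inE eqxx.
have : v \in [set a; b] by rewrite E !inE eqxx orbT.
rewrite !inE => /orP [] /eqP vE /orP [] /eqP uE;
  by move: uv; rewrite uE vE ?eqxx ?orbT.
Qed.

Lemma unordered_pairs_twice (T : finType) (R : rel T) : symmetric R ->
  #|[set p : {set T} | [exists u : T, exists v : T,
       [&& u != v, p == [set u; v] & R u v]]]| * 2 =
  \sum_(u : T) \sum_(v : T) ((u != v) && R u v : nat).
Proof.
move=> sR; pose O := [set q : T * T | (q.1 != q.2) && R q.1 q.2].
pose pair_set (q : T * T) := [set q.1; q.2].
have -> : [set p : {set T} | [exists u : T, exists v : T,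
       [&& u != v, p == [set u; v] & R u v]]] = pair_set @: O.
  apply/setP => p; rewrite inE; apply/existsP/imsetP.
    by case=> u /existsP [v /and3P [uv /eqP -> Ruv]]; exists (u, v); rewrite // inE uv.
  case=> -[u v]; rewrite inE /= => /andP [uv Ruv] ->.
  by exists u; apply/existsP; exists v; rewrite uv eqxx.
rewrite pair_big /= -[RHS]big_mkcond /=.
have -> : \sum_(q : T * T | (q.1 != q.2) && R q.1 q.2) 1 = \sum_(q in O) 1.
  by apply: eq_bigl => q; rewrite inE.
rewrite (partition_big_imset pair_set) /= -sum_nat_const.
apply: eq_bigr => p /imsetP [[u v]]; rewrite inE /= => /andP [uv Ruv] ->.
have vu : v != u by rewrite eq_sym.
rewrite sum1_card.
have -> : 2 = #|[set (u, v); (v, u)]| by rewrite cards2 xpair_eqE negb_and uv.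
apply/esym/eq_card => -[a b]; rewrite -topredE /= !inE /= !xpair_eqE /pair_set /=.
apply/andP/orP => [[/andP [ab _] /eqP E] | [] /andP [/eqP -> /eqP ->]].
- by apply/orP; apply: set2_inj E.
- by rewrite uv Ruv eqxx.
- by rewrite vu sR Ruv setUC eqxx.
Qed.

Lemma cost_twice (T : finType) (e : rel T) (Q : {set {set T}}) : symmetric e ->
  2 * cost e Q = \sum_(u : T) \sum_(v : T)
     ((u != v) && (same_cluster Q u v != e u v) : nat).
Proof.
move=> se; rewrite /cost mulnC.
apply: (unordered_pairs_twice (R := fun u v => same_cluster Q u v != e u v)).
by move=> u v /=; rewrite /same_cluster [pblock Q u == _]eq_sym se.
Qed.

Lemma same_clusterE (T : finType) (R : {set {set T}}) (u v : T) :
  partition R [set: T] -> same_cluster R u v = (v \in pblock R u).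
Proof.
by case/and3P => /eqP coverR trivR _; rewrite /same_cluster eq_pblock // coverR inE.
Qed.

Definition split_cluster (T : finType) (P : {set {set T}}) (S A : {set T}) :
  {set {set T}} := (P :\ S) :|: [set A; S :\: A].

(* Truth table behind the change of cost under a split: x and y say that (u, v)
   crosses from A to S \ A or back, ne that u != v, sP that u, v share a cluster of P. *)
Lemma mismatch_split (ne sP ee x y : bool) :
  x ==> ne && sP -> y ==> ne && sP -> ~~ (x && y) ->
  (ne && ((sP && ~~ (x || y)) != ee)) + (x && ~~ ee) + (y && ~~ ee) =
  (ne && (sP != ee)) + (x && ee) + (y && ee).
Proof. by case: ne sP ee x y => [] [] [] [] []. Qed.

Section SplitCluster.
Variables (T : finType) (P : {set {set T}}) (S A : {set T}).
Hypotheses (hP : partition P [set: T]) (SP : S \in P) (AS : A \subset S).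
Hypotheses (A0 : A != set0) (B0 : S :\: A != set0).

Lemma split_cluster_partition : partition (split_cluster P S A) [set: T].
Proof.
move: hP => /and3P [/eqP cP tP P0].
set B := S :\: A.
have BS : B \subset S by apply: subsetDl.
have dPS X : X \in P -> X != S -> [disjoint X & S].
  by move=> XP XS; move/trivIsetP: tP; apply.
apply/and3P; split.
- apply/eqP/setP => x; rewrite inE; apply/bigcupP.
  have xc : x \in cover P by rewrite cP.
  case: (eqVneq (pblock P x) S) => E.
    have xS : x \in S by rewrite -E mem_pblock.
    case xA : (x \in A); first by exists A; rewrite // !inE eqxx orbT.
    by exists B; rewrite !inE ?eqxx ?orbT ?xA.
  exists (pblock P x); last by rewrite mem_pblock.
  by rewrite !inE E pblock_mem.
- apply/trivIsetP => X Y; rewrite !inE.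
  move=> /orP [/andP [XS XP]|/orP [/eqP->|/eqP->]]
         /orP [/andP [YS YP]|/orP [/eqP->|/eqP->]] XY.
  + by move/trivIsetP: tP; apply.
  + by apply: disjointWr AS _; apply: dPS.
  + by apply: disjointWr BS _; apply: dPS.
  + by rewrite disjoint_sym; apply: disjointWr AS _; apply: dPS.
  + by rewrite eqxx in XY.
  + by rewrite disjoint_sym; have /subsetDP [] := subxx B.
  + by rewrite disjoint_sym; apply: disjointWr BS _; apply: dPS.
  + by have /subsetDP [] := subxx B.
  + by rewrite eqxx in XY.
- rewrite !inE negb_or !negb_or !(eq_sym set0) A0 B0 !andbT.
  by apply/negP => /andP [_ H]; rewrite H in P0.
Qed.

Lemma same_cluster_split (u v : T) :
  same_cluster (split_cluster P S A) u v =
  same_cluster P u v &&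
  ~~ ((u \in A) && (v \in S :\: A) || (u \in S :\: A) && (v \in A)).
Proof.
have hQ := split_cluster_partition.
have /and3P [/eqP cP tP _] := hP; have /and3P [_ tQ _] := hQ.
rewrite !same_clusterE //.
have AQ : A \in split_cluster P S A by rewrite !inE eqxx orbT.
have BQ : S :\: A \in split_cluster P S A by rewrite !inE eqxx !orbT.
have inS y : (y \in S) = (y \in A) || (y \in S :\: A).
  by rewrite !inE; case yA : (y \in A) => //=; rewrite (subsetP AS).
case uA : (u \in A).
  rewrite (def_pblock tQ AQ uA) (def_pblock tP SP (subsetP AS _ uA)) !inE uA /=.
  by case vA : (v \in A) => /=; rewrite ?orbF ?andbT ?andbN // (subsetP AS).
case uB : (u \in S :\: A).
  rewrite (def_pblock tQ BQ uB) (def_pblock tP SP (subsetP (subsetDl S A) _ uB)).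
  by rewrite /= inE andbC.
have uS : u \notin S by rewrite inS uA uB.
have uc : u \in cover P by rewrite cP inE.
have PuQ : pblock P u \in split_cluster P S A.
  rewrite !inE pblock_mem // andbT; apply/orP; left.
  by apply: contraNneq uS => <-; rewrite mem_pblock.
by rewrite (def_pblock tQ PuQ) ?mem_pblock // andbT.
Qed.

(* Splitting S into A and S \ A removes the |A||S \ A| non-edges across the split from
   the cost and adds the edges across it. *)
Lemma split_cluster_cost (e : rel T) : symmetric e ->
  cost e (split_cluster P S A) + #|A| * #|S :\: A| =
  cost e P + 2 * ecount e A (S :\: A).
Proof.
move=> se; pose ne := fun u v => ~~ e u v.
have crossS u v : (u \in A) && (v \in S :\: A) || (u \in S :\: A) && (v \in A) ->
    (u != v) && same_cluster P u v.
  move=> cross; have /and3P [_ tP _] := hP.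
  have inS y : (y \in A) || (y \in S :\: A) -> y \in S.
    by case/orP => [/(subsetP AS)|/(subsetP (subsetDl S A))].
  have uS : u \in S by apply: inS; case/orP: cross => /andP [-> _]; rewrite ?orbT.
  have vS : v \in S by apply: inS; case/orP: cross => /andP [_ ->]; rewrite ?orbT.
  have uv : u != v.
    by apply: contraTneq cross => <-; rewrite !inE; case: (u \in A); rewrite ?andbF.
  by rewrite uv same_clusterE // (def_pblock tP SP uS).
have sumE : 2 * cost e (split_cluster P S A) + ecount ne A (S :\: A) + ecount ne (S :\: A) A =
            2 * cost e P + ecount e A (S :\: A) + ecount e (S :\: A) A.
  rewrite !cost_twice // -!ecount_pairs -!big_split /=; apply: eq_bigr => u _.
  rewrite -!big_split /=; apply: eq_bigr => v _; rewrite same_cluster_split.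
  apply: mismatch_split; try (apply/implyP => H; rewrite crossS ?H ?orbT //).
  by rewrite !inE; case: (u \in A); rewrite ?andbF.
have sne : symmetric ne by move=> u v; rewrite /ne se.
rewrite (ecountC (S :\: A) A se) (ecountC (S :\: A) A sne) in sumE.
by have := ecount_complement e A (S :\: A); rewrite -/ne; lia.
Qed.

End SplitCluster.

Lemma min_cost_split_bound (T : finType) (e : rel T) (k : nat) (col : T -> 'I_k)
    (P : {set {set T}}) (S A : {set T}) :
  symmetric e -> min_cost_fair_clustering e col P -> S \in P -> A \subset S ->
  A != set0 -> S :\: A != set0 -> fair col A -> fair col (S :\: A) ->
  #|A| * #|S :\: A| <= 2 * ecount e A (S :\: A).
Proof.
move=> se [[hP fairP] minP] SP AS A0 B0 fA fB.
have fairQ : fair_clustering col (split_cluster P S A).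
  split; first exact: split_cluster_partition.
  by move=> X; rewrite !inE => /orP [/andP [_ /fairP] | /orP [] /eqP ->].
have := minP _ fairQ; have := split_cluster_cost hP SP AS A0 B0 se; lia.
Qed.

Definition color_counts (T : finType) (k : nat) (col : T -> 'I_k) (X : {set T})
  (f : 'I_k -> nat) : Prop :=
  forall i, #|X :&: color_class col i| = f i.

Section ColorCounts.
Variables (T : finType) (k : nat) (col : T -> 'I_k).

Lemma card_by_color (X : {set T}) : #|X| = \sum_(i < k) #|X :&: color_class col i|.
Proof.
rewrite -sum1_card (partition_big col xpredT) //=.
by apply: eq_bigr => i _; rewrite -sum1_card; apply: eq_bigl => x; rewrite !inE.
Qed.

Lemma color_counts_card (X : {set T}) (f : 'I_k -> nat) :
  color_counts col X f -> #|X| = \sum_(i < k) f i.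
Proof. by move=> hX; rewrite card_by_color; apply: eq_bigr => i _; rewrite hX. Qed.

Lemma card_in_ratio (c : 'I_k -> nat) (t : nat) :
  (forall i, #|color_class col i| = t * c i) -> #|T| = t * \sum_(i < k) c i.
Proof.
move=> hV; rewrite -cardsT card_by_color big_distrr.
by apply: eq_bigr => i _; rewrite setTI hV.
Qed.

Lemma color_counts_fair (c : 'I_k -> nat) (t q : nat) (X : {set T}) :
  (forall i, #|color_class col i| = t * c i) ->
  color_counts col X (fun i => q * c i) -> fair col X.
Proof.
move=> hV hX; apply/forallP => i.
rewrite (card_in_ratio hV) (color_counts_card hX) hV hX -big_distrr /=.
by apply/eqP; move: (\sum_(j < k) c j) => s; lia.
Qed.

Lemma biggcdn_mulr (c : 'I_k -> nat) (g : nat) :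
  \big[gcdn/0]_(i < k) (c i * g) = (\big[gcdn/0]_(i < k) c i) * g.
Proof. by apply: esym; apply: (big_morph (fun x => x * g)) => // x y; rewrite muln_gcdl. Qed.

Lemma fair_color_counts (c : 'I_k -> nat) (t : nat) (X : {set T}) :
  0 < t -> (forall i, #|color_class col i| = t * c i) ->
  \big[gcdn/0]_(i < k) c i = 1 -> 0 < \sum_(i < k) c i ->
  X != set0 -> fair col X ->
  exists2 m, 0 < m & color_counts col X (fun i => m * c i).
Proof.
move=> t0 hV g1 d0 X0 /forallP fX; set d := \sum_(i < k) c i in d0.
have prop i : #|X :&: color_class col i| * d = c i * #|X|.
  have /eqP := fX i; rewrite (card_in_ratio hV) hV -/d => E.
  by apply/eqP; rewrite -(eqn_pmul2l t0); apply/eqP; lia.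
have /dvdnP [m Em] : d %| #|X|.
  have : d %| \big[gcdn/0]_(i < k) (c i * #|X|).
    by apply/dvdn_biggcdP => i _; apply/dvdnP; exists #|X :&: color_class col i|; rewrite prop.
  by rewrite biggcdn_mulr g1 mul1n.
exists m => [|i]; first by move: X0; rewrite -card_gt0 Em muln_gt0 => /andP [].
by apply/eqP; rewrite -(eqn_pmul2r d0) prop Em; apply/eqP; lia.
Qed.

Lemma subset_of_card (B : {set T}) (n : nat) :
  n <= #|B| -> exists2 A : {set T}, A \subset B & #|A| = n.
Proof.
rewrite -bin_gt0 -cards_draws => /card_gt0P [A]; rewrite inE => /andP [AB /eqP cA].
by exists A.
Qed.

Lemma exists_piece (c : 'I_k -> nat) (m : nat) (S : {set T}) :
  0 < m -> color_counts col S (fun i => m * c i) ->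
  exists2 A : {set T}, A \subset S & color_counts col A c.
Proof.
move=> m0 hS.
have pick i : exists Y : {set T}, (Y \subset S :&: color_class col i) && (#|Y| == c i).
  have [|Y YS cY] := subset_of_card (n := c i) (B := S :&: color_class col i).
    by rewrite hS leq_pmull.
  by exists Y; rewrite YS cY eqxx.
have [Y hY] := fin_all_exists pick.
have YS i : Y i \subset S :&: color_class col i by case/andP: (hY i).
exists (\bigcup_(i < k) Y i).
  by apply/bigcupsP => i _; apply: subset_trans (YS i) (subsetIl _ _).
move=> i; have /andP [_ /eqP <-] := hY i; apply: eq_card => y; rewrite inE.
apply/andP/idP => [[/bigcupP [j _ yj] yi] | yi].
  have := subsetP (YS j) y yj; rewrite !inE => /andP [_ /eqP cj].
  by move: yi; rewrite inE cj => /eqP <-.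
split; first by apply/bigcupP; exists i.
by have := subsetP (YS i) y yi; rewrite inE => /andP [].
Qed.

Lemma card_setU1I (x : T) (C V : {set T}) :
  x \notin C -> #|(x |: C) :&: V| = (x \in V) + #|C :&: V|.
Proof.
move=> xC; rewrite setIUl; case xV : (x \in V).
  by rewrite (setIidPl _) ?sub1set // cardsU1 inE (negbTE xC).
rewrite (_ : [set x] :&: V = set0) ?set0U //.
by apply/setP => y; rewrite !inE; case: eqP => // ->.
Qed.

Lemma swap_color_counts (A : {set T}) (f : 'I_k -> nat) (x b : T) :
  color_counts col A f -> x \in A -> b \notin A -> col b = col x ->
  color_counts col (b |: (A :\ x)) f.
Proof.
move=> hA xA bA cb i; rewrite -hA -{2}(setD1K xA) !card_setU1I ?inE ?eqxx ?cb //.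
by rewrite (negbTE bA) andbF.
Qed.

Lemma color_counts_setD (A S : {set T}) (f g : 'I_k -> nat) :
  A \subset S -> color_counts col S f -> color_counts col A g ->
  color_counts col (S :\: A) (fun i => f i - g i).
Proof.
move=> AS hS hA i; rewrite -hS -hA setIDAC cardsD.
by rewrite setIAC (setIidPr AS).
Qed.

End ColorCounts.

Lemma setD_swap (T : finType) (S A : {set T}) (x b : T) :
  A \subset S -> x \in A -> b \in S :\: A ->
  S :\: (b |: (A :\ x)) = x |: ((S :\: A) :\ b).
Proof.
move=> AS xA bB; have xb : (x == b) = false.
  by apply: contraTF bB => /eqP <-; rewrite inE xA.
apply/setP => y; rewrite !inE; case: (eqVneq y x) => [->|_].
  by rewrite xb (subsetP AS).
by case: (y == b); case: (y \in A).
Qed.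

(* For d >= 3 and m >= 2, the number d^2 (m - 1) of pairs across a split of a cluster
   of size md into sizes d and (m - 1) d is at least 2md - 3. *)
Lemma cut_size_arith (d m : nat) : 3 <= d -> 1 < m -> 2 * (m * d) <= d * ((m - 1) * d) + 3.
Proof.
move=> d3 m1.
have md : m * d = (m - 1) * d + d by rewrite addnC -mulSn subn1 prednK // ltnW.
have ud : d <= (m - 1) * d by rewrite leq_pmull // subn_gt0.
by rewrite md; move: ud; set u := (m - 1) * d; nia.
Qed.

Section MinimumCostClusters.
Variables (T : finType) (e : rel T) (k : nat) (col : T -> 'I_k) (c : 'I_k -> nat).
Variables (t : nat) (P : {set {set T}}) (S : {set T}) (m : nat).
Hypotheses (sg : simple_graph e) (fe : forest e).
Hypothesis hV : forall i, #|color_class col i| = t * c i.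
Hypotheses (hmin : min_cost_fair_clustering e col P) (SP : S \in P).
Hypothesis hS : color_counts col S (fun i => m * c i).
Local Notation d := (\sum_(i < k) c i).

Lemma piece_cut_lower_bound (A : {set T}) :
  1 < m -> 0 < d -> A \subset S -> color_counts col A c ->
  d * ((m - 1) * d) <= 2 * ecount e A (S :\: A).
Proof.
move=> m1 d0 AS hA.
have hB := color_counts_setD AS hS hA.
have cardA : #|A| = d := color_counts_card hA.
have cardB : #|S :\: A| = (m - 1) * d.
  rewrite (color_counts_card hB) big_distrr; apply: eq_bigr => i _.
  by rewrite /= mulnBl mul1n.
have fA : fair col A by apply: (color_counts_fair (q := 1) hV) => i; rewrite mul1n.
have fB : fair col (S :\: A).
  by apply: (color_counts_fair (q := m - 1) hV) => i; rewrite hB mulnBl mul1n.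
have A0 : A != set0 by rewrite -card_gt0 cardA.
have B0 : S :\: A != set0 by rewrite -card_gt0 cardB muln_gt0 d0 subn_gt0 m1.
have [se _] := sg.
by have := min_cost_split_bound se hmin SP AS A0 B0 fA fB; rewrite cardA cardB.
Qed.

Lemma exchange_partner (A : {set T}) (x : T) :
  1 < m -> A \subset S -> color_counts col A c -> x \in A ->
  exists2 b, b \in S :\: A & col b = col x.
Proof.
move=> m1 AS hA xA.
have cx : 0 < c (col x).
  by rewrite -hA; apply/card_gt0P; exists x; rewrite !inE xA eqxx.
have : 0 < #|(S :\: A) :&: color_class col (col x)|.
  by rewrite (color_counts_setD AS hS hA) -{2}(mul1n (c _)) -mulnBl muln_gt0 subn_gt0 m1.
by case/card_gt0P => b; rewrite !inE => /andP [bB /eqP cb]; exists b; rewrite ?inE.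
Qed.

Lemma multiplicity_one : 0 < m -> 3 <= d -> m = 1.
Proof.
move=> m0 d3; apply/eqP; rewrite eqn_leq m0 andbT leqNgt; apply/negP => m1.
have d0 : 0 < d by lia.
have [A AS hA] := exists_piece m0 hS.
have cardA : #|A| = d := color_counts_card hA.
have [x xA] : exists x, x \in A by apply/card_gt0P; rewrite cardA.
have [b bB cb] := exchange_partner m1 AS hA xA.
have bA : b \notin A by move: bB; rewrite inE => /andP [].
have hA' := swap_color_counts hA xA bA cb.
have A'S : b |: (A :\ x) \subset S.
  by rewrite subUset sub1set (subsetP (subsetDl S A)) //= (subset_trans (subD1set A x)).
have C0 : A :\ x != set0 by rewrite -card_gt0 -(ltn_add2l (x \in A)) -cardsD1 xA cardA; lia.
have dAB : [disjoint A & S :\: A].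
  by rewrite disjoint_sym; have /subsetDP [] := subxx (S :\: A).
have := forest_swap_cut_bound sg fe dAB xA bB C0.
have SE : A :|: (S :\: A) = S by rewrite -{1}(setIidPr AS) setID.
rewrite -setD_swap // SE (color_counts_card hS) -big_distrr /=.
have := piece_cut_lower_bound m1 d0 AS hA; have := piece_cut_lower_bound m1 d0 A'S hA'.
have := cut_size_arith d3 m1.
(* Each cut has at least d^2 (m - 1) / 2 edges, hence, by integrality, the two cuts
   together have at least 2md - 2 > 2md - 3 edges. *)
by move: (d * _) (m * d) => D M; lia.
Qed.

End MinimumCostClusters.

Theorem mainTheorem2 (T : finType) (e : rel T) (k : nat) (col : T -> 'I_k)
    (c : 'I_k -> nat) :
  simple_graph e -> forest e ->
  2 <= k ->
  (forall i, 0 < c i) ->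
  \big[gcdn/0]_(i < k) c i = 1 ->
  3 <= \sum_(i < k) c i ->
  in_ratio col c ->
  forall P : {set {set T}}, min_cost_fair_clustering e col P ->
  forall S, S \in P -> #|S| = \sum_(i < k) c i.
Proof.
move=> sg fe _ _ g1 d3 [t t0 hV] P hmin S SP.
have [[/and3P [_ _ P0] fairP] _] := hmin.
have S0 : S != set0 by apply: contraNneq P0 => <-.
have d0 : 0 < \sum_(i < k) c i by apply: leq_trans d3.
have [m m0 hS] := fair_color_counts t0 hV g1 d0 S0 (fairP S SP).
have m1 := multiplicity_one sg fe hV hmin SP hS m0 d3.
by rewrite (color_counts_card hS) -big_distrr m1 /= mul1n.
Qed.
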